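(* Let $T:X\rightrightarrows X^*$ be a multivalued operator and let $x\in X$. The following are equivalent: (1) $V_T(x)=\emptyset$; (2) $x\in Z_{T^\rho}$; (3) $T^\rho(x)=N_{W_T(x)}(x)$; (4) $x\in\mathrm{dom}(T^\rho)$ and $T^\rho(x)$ is weak$^*$-closed.
   Context: $X$ is a real Banach space with dual $X^*$ and pairing $\langle x,x^*\rangle=x^*(x)$. A multivalued operator $T:X\rightrightarrows X^*$ is identified with its graph $T\subset X\times X^*$; $T(x)=\{x^*:(x,x^* )\in T\}$, $\mathrm{dom}(T)=\{x:T(x)\neq\emptyset\}$, and $Z_T=\{x: 0\in T(x)\}$. $V_T(x)=\{y\in X:\exists\, y^*\in T(y),\ \langle x-y,y^*\rangle>0\}$ and $W_T(x)=\{y\in X:\exists\, y^*\in T(y),\ \langle x-y,y^*\rangle=0\}$. For $C\subset X$, $N_C(x)=\{x^*\in X^*: \langle y-x,x^*\rangle\le 0\ \forall y\in C\}$ (equal to $X^*$ if $C=\emptyset$). For $(x,x^* ),(y,y^* )\in X\times X^*$, write $(x,x^* )\sim_p(y,y^* )$ if either $\min\{\langle x-y,y^*\rangle,\langle y-x,x^*\rangle\}<0$ or $\langle x-y,y^*\rangle=\langle y-x,x^*\rangle=0$. The pseudomonotone polar of $T$ is $T^\rho=\{(x,x^* )\in X\times X^*: (x,x^* )\sim_p(y,y^* )\ \forall (y,y^* )\in T\}$. *)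

From Stdlib Require Import Reals List.
Open Scope R_scope.

Record BanachSpace := {
  bs_car :> Type;
  bs_zero : bs_car;
  bs_add : bs_car -> bs_car -> bs_car;
  bs_opp : bs_car -> bs_car;
  bs_scal : R -> bs_car -> bs_car;
  bs_norm : bs_car -> R;
  bs_addA : forall x y z, bs_add x (bs_add y z) = bs_add (bs_add x y) z;
  bs_addC : forall x y, bs_add x y = bs_add y x;
  bs_add0 : forall x, bs_add bs_zero x = x;
  bs_addN : forall x, bs_add x (bs_opp x) = bs_zero;
  bs_scalA : forall a b x, bs_scal a (bs_scal b x) = bs_scal (a * b) x;
  bs_scal1 : forall x, bs_scal 1 x = x;
  bs_scalDr : forall a x y, bs_scal a (bs_add x y) = bs_add (bs_scal a x) (bs_scal a y);
  bs_scalDl : forall a b x, bs_scal (a + b) x = bs_add (bs_scal a x) (bs_scal b x);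
  bs_norm_eq0 : forall x, bs_norm x = 0 -> x = bs_zero;
  bs_normZ : forall a x, bs_norm (bs_scal a x) = Rabs a * bs_norm x;
  bs_normD : forall x y, bs_norm (bs_add x y) <= bs_norm x + bs_norm y;
  bs_complete : forall u : nat -> bs_car,
    (forall eps, eps > 0 -> exists N, forall n m, (n >= N)%nat -> (m >= N)%nat ->
        bs_norm (bs_add (u n) (bs_opp (u m))) < eps) ->
    exists l, forall eps, eps > 0 -> exists N, forall n, (n >= N)%nat ->
        bs_norm (bs_add (u n) (bs_opp l)) < eps
}.

Definition bs_sub (X : BanachSpace) (x y : X) : X := bs_add X x (bs_opp X y).

Definition is_linear_functional (X : BanachSpace) (f : X -> R) : Prop :=
  (forall x y, f (bs_add X x y) = f x + f y) /\
  (forall a x, f (bs_scal X a x) = a * f x).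

Definition is_bounded_functional (X : BanachSpace) (f : X -> R) : Prop :=
  exists M, forall x, Rabs (f x) <= M * bs_norm X x.

Definition dual (X : BanachSpace) : Type :=
  { f : X -> R | is_linear_functional X f /\ is_bounded_functional X f }.

Definition pair (X : BanachSpace) (x : X) (xs : dual X) : R := proj1_sig xs x.

Definition operator (X : BanachSpace) := X -> dual X -> Prop.

Definition dom (X : BanachSpace) (T : operator X) : X -> Prop :=
  fun x => exists xs, T x xs.

Definition zero_dual (X : BanachSpace) : dual X.
Proof.
  exists (fun _ => 0). split.
  - split; intros; ring.
  - exists 0. intros x. rewrite Rabs_R0. right; ring.
Defined.

Definition Zset (X : BanachSpace) (T : operator X) : X -> Prop :=
  fun x => T x (zero_dual X).

Definition Vset (X : BanachSpace) (T : operator X) (x : X) : X -> Prop :=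
  fun y => exists ys, T y ys /\ pair X (bs_sub X x y) ys > 0.

Definition Wset (X : BanachSpace) (T : operator X) (x : X) : X -> Prop :=
  fun y => exists ys, T y ys /\ pair X (bs_sub X x y) ys = 0.

(* Normal cone N_C(x); equals X^* when C is empty. *)
Definition normal_cone (X : BanachSpace) (C : X -> Prop) (x : X) : dual X -> Prop :=
  fun xs => forall y, C y -> pair X (bs_sub X y x) xs <= 0.

Definition sim_p (X : BanachSpace) (x : X) (xs : dual X) (y : X) (ys : dual X) : Prop :=
  Rmin (pair X (bs_sub X x y) ys) (pair X (bs_sub X y x) xs) < 0 \/
  (pair X (bs_sub X x y) ys = 0 /\ pair X (bs_sub X y x) xs = 0).

Definition pm_polar (X : BanachSpace) (T : operator X) : operator X :=
  fun x xs => forall y ys, T y ys -> sim_p X x xs y ys.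

(* weak^* topology sigma(X^*, X): basic neighbourhoods given by finitely many
   points of X and a radius. *)
Definition weak_star_open (X : BanachSpace) (U : dual X -> Prop) : Prop :=
  forall f, U f -> exists (l : list X) (eps : R), eps > 0 /\
    forall g, (forall z, In z l -> Rabs (pair X z g - pair X z f) < eps) -> U g.

Definition weak_star_closed (X : BanachSpace) (S : dual X -> Prop) : Prop :=
  weak_star_open X (fun f => ~ S f).

From Stdlib Require Import Reals List Lra Classical.
Open Scope R_scope.

(* Condition (1) says that [<x - y, y^*> <= 0] on the whole graph of [T].  Under
   it, the strict alternative of [~p] against a point of the graph can fail
   only on [W_T(x)], so [T^rho(x)] is exactly the normal cone [N_{W_T(x)}(x)];
   this gives (1) -> (2), (3), (4), and (3) -> (2) because [0] lies in every
   normal cone.  Conversely [0 \in T^rho(x)] is (1) spelled out, and (4) -> (2)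
   because [T^rho(x)] is a cone: [t x^*] tends weak* to [0] as [t -> 0+], so a
   nonempty weak*-closed cone contains [0]. *)

Section PseudomonotonePolar.

Variable X : BanachSpace.

Definition scal_dual (t : R) (f : dual X) : dual X.
Proof.
  exists (fun z => t * proj1_sig f z).
  destruct (proj2_sig f) as [[Hadd Hscal] [M HM]]. split.
  - split; intros; rewrite ?Hadd, ?Hscal; ring.
  - exists (Rabs t * M). intros z. rewrite Rabs_mult, Rmult_assoc.
    apply Rmult_le_compat_l; [apply Rabs_pos | apply HM].
Defined.

Lemma pair_scal (z : X) (t : R) (f : dual X) :
  pair X z (scal_dual t f) = t * pair X z f.
Proof. reflexivity. Qed.

Lemma pair_zero (z : X) : pair X z (zero_dual X) = 0.
Proof. reflexivity. Qed.

Lemma sim_pE (x : X) (xs : dual X) (y : X) (ys : dual X) :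
  sim_p X x xs y ys <->
  pair X (bs_sub X x y) ys < 0 \/ pair X (bs_sub X y x) xs < 0 \/
  (pair X (bs_sub X x y) ys = 0 /\ pair X (bs_sub X y x) xs = 0).
Proof.
  unfold sim_p, Rmin.
  destruct (Rle_dec (pair X (bs_sub X x y) ys) (pair X (bs_sub X y x) xs));
  split; intros H; (destruct H as [H|[H|H]] || destruct H as [H|H]); lra.
Qed.

Lemma sim_p_scal (t : R) (x : X) (xs : dual X) (y : X) (ys : dual X) :
  t > 0 -> sim_p X x xs y ys -> sim_p X x (scal_dual t xs) y ys.
Proof.
  intros Ht [H | [H | [H1 H2]]]%sim_pE; apply sim_pE; rewrite pair_scal.
  - now left.
  - right; left. nra.
  - right; right. rewrite H2. split; [exact H1 | ring].
Qed.

Lemma pm_polar_scal (T : operator X) (x : X) (t : R) (xs : dual X) :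
  t > 0 -> pm_polar X T x xs -> pm_polar X T x (scal_dual t xs).
Proof. intros Ht Hxs y ys Hy. now apply sim_p_scal, Hxs. Qed.

Lemma exists_small_scaling {A : Type} (h : A -> R) (l : list A) (eps : R) :
  eps > 0 -> exists t, t > 0 /\ forall z, In z l -> Rabs (t * h z) < eps.
Proof.
  intros Heps. induction l as [|a l [t [Ht Hl]]].
  - exists 1. split; [lra | intros z []].
  - set (ta := eps / (Rabs (h a) + 1)).
    assert (Hha := Rabs_pos (h a)).
    assert (Hta : ta * (Rabs (h a) + 1) = eps) by (unfold ta; field; lra).
    assert (Hta_pos : ta > 0) by (unfold ta; apply Rdiv_lt_0_compat; lra).
    exists (Rmin t ta).
    assert (Hmin_pos : Rmin t ta > 0) by (apply Rmin_glb_lt; lra).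
    split; [exact Hmin_pos|].
    intros z Hz. rewrite Rabs_mult, (Rabs_right (Rmin t ta)) by lra.
    destruct Hz as [<- | Hz].
    + assert (Rmin t ta <= ta) by apply Rmin_r. nra.
    + specialize (Hl z Hz). rewrite Rabs_mult, (Rabs_right t) in Hl by lra.
      assert (Rmin t ta <= t) by apply Rmin_l.
      assert (Hhz := Rabs_pos (h z)). nra.
Qed.

Lemma weak_star_closed_cone_zero (S : dual X -> Prop) (f : dual X) :
  weak_star_closed X S -> (forall t g, t > 0 -> S g -> S (scal_dual t g)) ->
  S f -> S (zero_dual X).
Proof.
  intros Hcl Hcone Hf. apply NNPP. intros H0.
  destruct (Hcl _ H0) as [l [eps [Heps Hnbhd]]].
  destruct (exists_small_scaling (fun z => pair X z f) l eps Heps) as [t [Ht Hl]].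
  apply (Hnbhd (scal_dual t f)); [|exact (Hcone t f Ht Hf)].
  intros z Hz. rewrite pair_scal, pair_zero, Rminus_0_r. exact (Hl z Hz).
Qed.

Lemma normal_cone_zero (C : X -> Prop) (x : X) : normal_cone X C x (zero_dual X).
Proof. intros y _. rewrite pair_zero. lra. Qed.

Lemma normal_cone_weak_star_closed (C : X -> Prop) (x : X) :
  weak_star_closed X (normal_cone X C x).
Proof.
  intros f Hf.
  destruct (not_all_ex_not _ _ Hf) as [y Hy].
  apply imply_to_and in Hy as [HCy Hpos%Rnot_le_lt].
  exists (bs_sub X y x :: nil), (pair X (bs_sub X y x) f). split; [lra|].
  intros g Hg Hng.
  specialize (Hg _ (or_introl eq_refl)). specialize (Hng y HCy).
  apply Rabs_def2 in Hg. lra.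
Qed.

Lemma weak_star_closed_ext (S S' : dual X -> Prop) :
  (forall f, S f <-> S' f) -> weak_star_closed X S -> weak_star_closed X S'.
Proof.
  intros HSS' Hcl f Hf. rewrite <- HSS' in Hf.
  destruct (Hcl f Hf) as [l [eps [Heps Hnbhd]]].
  exists l, eps. split; [exact Heps|].
  intros g Hg. rewrite <- HSS'. exact (Hnbhd g Hg).
Qed.

Variable T : operator X.

Lemma no_V_iff (x : X) :
  (forall y, ~ Vset X T x y) <->
  (forall y ys, T y ys -> pair X (bs_sub X x y) ys <= 0).
Proof.
  split.
  - intros H y ys Hy. apply Rnot_lt_le. intros Hpos. apply (H y). now exists ys.
  - intros H y [ys [Hy Hpos]]. specialize (H y ys Hy). lra.
Qed.

Lemma Zset_pm_polar_iff (x : X) :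
  Zset X (pm_polar X T) x <-> forall y, ~ Vset X T x y.
Proof.
  rewrite no_V_iff. unfold Zset, pm_polar.
  setoid_rewrite sim_pE. setoid_rewrite pair_zero.
  split; intros H y ys Hy; specialize (H y ys Hy); lra.
Qed.

Lemma pm_polar_normal_cone (x : X) (xs : dual X) :
  (forall y, ~ Vset X T x y) ->
  pm_polar X T x xs <-> normal_cone X (Wset X T x) x xs.
Proof.
  rewrite no_V_iff. intros HV. split.
  - intros Hxs y [ys [Hy Hw]]. apply Hxs, sim_pE in Hy. lra.
  - intros Hn y ys Hy. apply sim_pE. specialize (HV y ys Hy).
    destruct (Rle_lt_or_eq_dec _ _ HV) as [Hlt | Hw]; [now left|].
    specialize (Hn y (ex_intro _ ys (conj Hy Hw))).
    destruct (Rle_lt_or_eq_dec _ _ Hn); [right; left | right; right]; auto.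
Qed.

End PseudomonotonePolar.

Theorem mainTheorem5 (X : BanachSpace) (T : operator X) (x : X) :
  let c1 := (forall y, ~ Vset X T x y) in
  let c2 := Zset X (pm_polar X T) x in
  let c3 := (forall xs, pm_polar X T x xs <-> normal_cone X (Wset X T x) x xs) in
  let c4 := (dom X (pm_polar X T) x /\ weak_star_closed X (pm_polar X T x)) in
  (c1 <-> c2) /\ (c1 <-> c3) /\ (c1 <-> c4).
Proof.
  cbv zeta. rewrite <- Zset_pm_polar_iff.
  split; [reflexivity | split; split].
  - intros H0 xs. apply pm_polar_normal_cone, Zset_pm_polar_iff, H0.
  - intros Hpolar. apply Hpolar, normal_cone_zero.
  - intros H0. split; [now exists (zero_dual X)|].
    apply (weak_star_closed_ext X (normal_cone X (Wset X T x) x)).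
    + intros xs. symmetry. now apply pm_polar_normal_cone, Zset_pm_polar_iff.
    + apply normal_cone_weak_star_closed.
  - intros [[xs Hxs] Hcl]. unfold Zset.
    apply (weak_star_closed_cone_zero X _ xs Hcl); [|exact Hxs].
    intros t g Ht. apply pm_polar_scal, Ht.
Qed.
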